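(* Let $M$ be a $po$-$\Gamma$-semigroup. Then $M$ is completely regular if and only if every bi-ideal of $M$ is semiprime.
   Context: A $po$-$\Gamma$-semigroup is a triple $(M,\Gamma,\le)$ where $M,\Gamma$ are nonempty sets with a map $M\times\Gamma\times M\to M$, $(a,\gamma,b)\mapsto a\gamma b$, satisfying $(a\gamma b)\mu c=a\gamma(b\mu c)$ for all $a,b,c\in M$, $\gamma,\mu\in\Gamma$, and $\le$ is a partial order on $M$ such that $a\le b$ implies $a\gamma c\le b\gamma c$ and $c\gamma a\le c\gamma b$ for all $c\in M$, $\gamma\in\Gamma$. For $A,B\subseteq M$, $A\Gamma B=\{a\gamma b: a\in A,\gamma\in\Gamma,b\in B\}$ (with $a\Gamma B$ meaning $\{a\}\Gamma B$, etc.), and $(A]=\{t\in M: t\le a \text{ for some } a\in A\}$. $M$ is regular if $a\in(a\Gamma M\Gamma a]$ for all $a\in M$; left regular if $a\in(M\Gamma a\Gamma a]$ for all $a\in M$; right regular if $a\in(a\Gamma a\Gamma M]$ for all $a\in M$; completely regular if it is regular, left regular and right regular. A bi-ideal of $M$ is a nonempty subset $B\subseteq M$ such that $B\Gamma M\Gamma B\subseteq B$ and, whenever $a\in B$, $b\in M$ and $b\le a$, then $b\in B$. A subset $B$ of $M$ is semiprime if for every $a\in M$, $a\Gamma a\subseteq B$ implies $a\in B$. *)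

Record poGammaSemigroup := {
  carrier : Type;
  gam : Type;
  carrier_inhabited : inhabited carrier;
  gam_inhabited : inhabited gam;
  op : carrier -> gam -> carrier -> carrier;
  le : carrier -> carrier -> Prop;
  op_assoc : forall (a b c : carrier) (g m : gam),
      op (op a g b) m c = op a g (op b m c);
  le_refl : forall a, le a a;
  le_antisym : forall a b, le a b -> le b a -> a = b;
  le_trans : forall a b c, le a b -> le b c -> le a c;
  le_op_r : forall (a b c : carrier) (g : gam), le a b -> le (op a g c) (op b g c);
  le_op_l : forall (a b c : carrier) (g : gam), le a b -> le (op c g a) (op c g b)
}.

Section Defs.
Variable S : poGammaSemigroup.
Let M := carrier S.
Let G := gam S.

Definition setGam (A B : M -> Prop) : M -> Prop :=
  fun t => exists a g b, A a /\ B b /\ t = op S a g b.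

Definition fullset : M -> Prop := fun _ => True.
Definition single (a : M) : M -> Prop := fun t => t = a.

Definition downcl (A : M -> Prop) : M -> Prop :=
  fun t => exists a, A a /\ le S t a.

Definition regular : Prop :=
  forall a : M, downcl (setGam (setGam (single a) fullset) (single a)) a.
Definition left_regular : Prop :=
  forall a : M, downcl (setGam (setGam fullset (single a)) (single a)) a.
Definition right_regular : Prop :=
  forall a : M, downcl (setGam (setGam (single a) (single a)) fullset) a.
Definition completely_regular : Prop :=
  regular /\ left_regular /\ right_regular.

Definition bi_ideal (B : M -> Prop) : Prop :=
  (exists x, B x) /\
  (forall t, setGam (setGam B fullset) B t -> B t) /\
  (forall a b, B a -> le S b a -> B b).

Definition semiprime (B : M -> Prop) : Prop :=
  forall a : M, (forall g : G, B (op S a g a)) -> B a.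

End Defs.


(* (=>) If a <= aΓxΓa, a <= aΓaΓy and a <= zΓaΓa, substituting the last two
   into the first gives a <= (aΓa)Γ(yΓxΓz)Γ(aΓa), which lies in BΓMΓB as soon
   as aΓa lies in B.
   (<=) The down-closure of a set P with PΓMΓP contained in P is a bi-ideal, so
   aΓa in (P] forces a in (P].  Taking P = MΓa and P = aΓM gives a in (MΓa] and
   a in (aΓM]; with these, aΓa lies in (aΓMΓa], (MΓaΓa] and (aΓaΓM], hence so
   does a. *)

Section PoGammaSemigroup.
Variable S : poGammaSemigroup.

Local Notation M := (carrier S).
Local Notation "x <= y" := (le S x y).
Local Notation "x .[ g ] y" := (op S x g y)
  (at level 40, g at level 60, left associativity, format "x  .[ g ]  y").

Lemma le_op2 (a b c d : M) g : a <= b -> c <= d -> a .[g] c <= b .[g] d.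
Proof.
  intros Hab Hcd. apply (le_trans S) with (b .[g] c).
  - now apply le_op_r.
  - now apply le_op_l.
Qed.

Lemma setGam2P (A B C : M -> Prop) t :
  setGam S (setGam S A B) C t <->
  exists x g y h z, A x /\ B y /\ C z /\ t = x .[g] y .[h] z.
Proof.
  split.
  - intros (u & h & z & (x & g & y & Ax & By & ->) & Cz & ->).
    now exists x, g, y, h, z.
  - intros (x & g & y & h & z & Ax & By & Cz & ->).
    exists (x .[g] y), h, z. split; [now exists x, g, y | auto].
Qed.

Lemma downcl_setGam2P (A B C : M -> Prop) t :
  downcl S (setGam S (setGam S A B) C) t <->
  exists x g y h z, A x /\ B y /\ C z /\ t <= x .[g] y .[h] z.
Proof.
  split.
  - intros (u & Hu & Htu). apply setGam2P in Hu.
    destruct Hu as (x & g & y & h & z & Ax & By & Cz & ->).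
    now exists x, g, y, h, z.
  - intros (x & g & y & h & z & Ax & By & Cz & Ht).
    exists (x .[g] y .[h] z). split; [apply setGam2P; now exists x, g, y, h, z | exact Ht].
Qed.

Lemma regularP :
  regular S <-> forall a, exists g m h, a <= a .[g] m .[h] a.
Proof.
  split; intros Hreg a; specialize (Hreg a).
  - apply downcl_setGam2P in Hreg.
    destruct Hreg as (a1 & g & m & h & a2 & -> & _ & -> & Ha). eauto.
  - destruct Hreg as (g & m & h & Ha).
    apply downcl_setGam2P. exists a, g, m, h, a. now repeat split.
Qed.

Lemma left_regularP :
  left_regular S <-> forall a, exists m g h, a <= m .[g] a .[h] a.
Proof.
  split; intros Hreg a; specialize (Hreg a).
  - apply downcl_setGam2P in Hreg.
    destruct Hreg as (m & g & a1 & h & a2 & _ & -> & -> & Ha). eauto.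
  - destruct Hreg as (m & g & h & Ha).
    apply downcl_setGam2P. exists m, g, a, h, a. now repeat split.
Qed.

Lemma right_regularP :
  right_regular S <-> forall a, exists g h m, a <= a .[g] a .[h] m.
Proof.
  split; intros Hreg a; specialize (Hreg a).
  - apply downcl_setGam2P in Hreg.
    destruct Hreg as (a1 & g & a2 & h & m & -> & -> & _ & Ha). eauto.
  - destruct Hreg as (g & h & m & Ha).
    apply downcl_setGam2P. exists a, g, a, h, m. now repeat split.
Qed.

Lemma bi_idealP (B : M -> Prop) :
  bi_ideal S B <->
  (exists x, B x) /\
  (forall p q m g h, B p -> B q -> B (p .[g] m .[h] q)) /\
  (forall a b, B a -> b <= a -> B b).
Proof.
  unfold bi_ideal. split; intros (Hne & Hclosed & Hdown); repeat split; auto.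
  - intros p q m g h Bp Bq. apply Hclosed, setGam2P.
    now exists p, g, m, h, q.
  - intros t Ht. apply setGam2P in Ht.
    destruct Ht as (p & g & m & h & q & Bp & _ & Bq & ->). auto.
Qed.

Lemma downcl_bi_ideal (P : M -> Prop) :
  (exists x, P x) ->
  (forall p q m g h, P p -> P q -> P (p .[g] m .[h] q)) ->
  bi_ideal S (downcl S P).
Proof.
  intros (x & Px) Hclosed. apply bi_idealP. repeat split.
  - exists x, x. split; [exact Px | apply le_refl].
  - intros p' q' m g h (p & Pp & Hp) (q & Pq & Hq).
    exists (p .[g] m .[h] q). split; [auto | apply le_op2; [apply le_op_r |]; assumption].
  - intros a b (p & Pp & Hap) Hba. exists p. split; [exact Pp | eapply le_trans; eauto].
Qed.

Lemma bi_ideal_semiprime_of_regular :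
  regular S -> left_regular S -> right_regular S ->
  forall B, bi_ideal S B -> semiprime S B.
Proof.
  intros Hreg Hlreg Hrreg B HB a Hsq.
  apply bi_idealP in HB as (_ & Hclosed & Hdown).
  destruct (proj1 regularP Hreg a) as (al & x & be & Hx).
  destruct (proj1 right_regularP Hrreg a) as (ga & de & y & Hy).
  destruct (proj1 left_regularP Hlreg a) as (z & ep & ze & Hz).
  apply Hdown with (a .[ga] a .[de] (y .[al] x .[be] z) .[ep] (a .[ze] a)).
  - now apply Hclosed.
  - replace (a .[ga] a .[de] (y .[al] x .[be] z) .[ep] (a .[ze] a))
      with (a .[ga] a .[de] y .[al] x .[be] (z .[ep] a .[ze] a))
      by (now rewrite !op_assoc).
    eapply le_trans; [exact Hx |].
    apply le_op2; [apply le_op_r |]; assumption.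
Qed.

Section AllBiIdealsSemiprime.
Hypothesis bi_ideal_semiprime : forall B, bi_ideal S B -> semiprime S B.

Lemma mem_downcl_of_squares (P : M -> Prop) a :
  (forall p q m g h, P p -> P q -> P (p .[g] m .[h] q)) ->
  (forall g, downcl S P (a .[g] a)) ->
  downcl S P a.
Proof.
  intros Hclosed Hsq. destruct (gam_inhabited S) as [g].
  apply bi_ideal_semiprime; [apply downcl_bi_ideal | exact Hsq].
  - destruct (Hsq g) as (p & Pp & _). now exists p.
  - exact Hclosed.
Qed.

Lemma le_left_multiple a : exists m g, a <= m .[g] a.
Proof.
  assert (Ha : downcl S (fun t => exists m g, t = m .[g] a) a).
  { apply mem_downcl_of_squares.
    - intros p q m g h _ (n & k & ->).
      exists (p .[g] m .[h] n), k. now rewrite !op_assoc.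
    - intros g. exists (a .[g] a). split; [eauto | apply le_refl]. }
  destruct Ha as (t & (m & g & ->) & Ha). eauto.
Qed.

Lemma le_right_multiple a : exists g m, a <= a .[g] m.
Proof.
  assert (Ha : downcl S (fun t => exists g m, t = a .[g] m) a).
  { apply mem_downcl_of_squares.
    - intros p q m g h (k & n & ->) _.
      exists k, (n .[g] m .[h] q). now rewrite !op_assoc.
    - intros g. exists (a .[g] a). split; [eauto | apply le_refl]. }
  destruct Ha as (t & (g & m & ->) & Ha). eauto.
Qed.

Lemma regular_of_bi_ideal_semiprime : regular S.
Proof.
  apply regularP. intros a.
  assert (Ha : downcl S (fun t => exists g m h, t = a .[g] m .[h] a) a).
  { apply mem_downcl_of_squares.
    - intros p q m g h (g1 & m1 & h1 & ->) (g2 & m2 & h2 & ->).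
      exists g1, (m1 .[h1] a .[g] m .[h] a .[g2] m2), h2. now rewrite !op_assoc.
    - intros g. destruct (le_right_multiple a) as (h & m & Ham).
      exists (a .[h] m .[g] a). split; [eauto | now apply le_op_r]. }
  destruct Ha as (t & (g & m & h & ->) & Ha). eauto.
Qed.

Lemma left_regular_of_bi_ideal_semiprime : left_regular S.
Proof.
  apply left_regularP. intros a.
  assert (Ha : downcl S (fun t => exists m g h, t = m .[g] a .[h] a) a).
  { apply mem_downcl_of_squares.
    - intros p q m g h _ (n & k & l & ->).
      exists (p .[g] m .[h] n), k, l. now rewrite !op_assoc.
    - intros g. destruct (le_left_multiple a) as (m & h & Ham).
      exists (m .[h] a .[g] a). split; [eauto | now apply le_op_r]. }
  destruct Ha as (t & (m & g & h & ->) & Ha). eauto.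
Qed.

Lemma right_regular_of_bi_ideal_semiprime : right_regular S.
Proof.
  apply right_regularP. intros a.
  assert (Ha : downcl S (fun t => exists g h m, t = a .[g] a .[h] m) a).
  { apply mem_downcl_of_squares.
    - intros p q m g h (k & l & n & ->) _.
      exists k, l, (n .[g] m .[h] q). now rewrite !op_assoc.
    - intros g. destruct (le_right_multiple a) as (h & m & Ham).
      exists (a .[g] a .[h] m). split; [eauto |].
      rewrite op_assoc. now apply le_op_l. }
  destruct Ha as (t & (g & h & m & ->) & Ha). eauto.
Qed.

End AllBiIdealsSemiprime.
End PoGammaSemigroup.

Theorem proposition4 (S : poGammaSemigroup) :
  completely_regular S <->
  (forall B : carrier S -> Prop, bi_ideal S B -> semiprime S B).
Proof.
  split.
  - intros (Hreg & Hlreg & Hrreg).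
    now apply bi_ideal_semiprime_of_regular.
  - intros Hsemiprime. repeat split.
    + now apply regular_of_bi_ideal_semiprime.
    + now apply left_regular_of_bi_ideal_semiprime.
    + now apply right_regular_of_bi_ideal_semiprime.
Qed.
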